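(* Let $\delta:(0,\infty)\to(0,\tfrac14)$ be a function with $\delta(\varepsilon)\to0$ as $\varepsilon\to0^+$. For every $\alpha\in(0,1)$ there exist $r=r(\alpha)>0$ and $\bar\varepsilon_2>0$ (depending only on $\alpha$ and $\delta$) such that: if $E\subseteq\mathbb{R}^2$ is convex with $B_{1-\delta(\varepsilon)}\subseteq E\subseteq B_{1+\delta(\varepsilon)}$ for some $0<\varepsilon<\bar\varepsilon_2$, then \[ \left\{y\in B_r(x):\ \frac{x-y}{|x-y|}\cdot\nu_E(x)\ge\alpha\right\}\subseteq E\qquad\text{for }\mathcal{H}^1\text{-a.e. }x\in\partial E, \] where $\nu_E(x)$ is the outer unit normal to $E$ at $x$.
   Context: $B_r(x)$ is the open ball of radius $r$ centered at $x$ in $\mathbb{R}^2$, and $B_r=B_r(0)$. For a convex set $E$ the outer unit normal $\nu_E(x)$ exists for $\mathcal{H}^1$-a.e. $x\in\partial E$. *)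

From mathcomp Require Import all_boot all_order all_algebra.
From mathcomp Require Import reals.
Set Implicit Arguments. Unset Strict Implicit. Unset Printing Implicit Defensive.
Import Order.TTheory GRing.Theory Num.Theory.
Local Open Scope ring_scope.

Section Defs.
Variable R : realType.
Definition pt := (R * R)%type.

Definition psub (x y : pt) : pt := (x.1 - y.1, x.2 - y.2).
Definition dot (x y : pt) : R := x.1 * y.1 + x.2 * y.2.
Definition enorm (x : pt) : R := Num.sqrt (dot x x).
Definition dist (x y : pt) : R := enorm (psub x y).

Definition ball2 (x : pt) (r : R) : pt -> Prop := fun y => dist y x < r.

Definition convex2 (E : pt -> Prop) : Prop :=
  forall x y t, E x -> E y -> 0 <= t <= 1 ->
    E ((1 - t) * x.1 + t * y.1, (1 - t) * x.2 + t * y.2).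

Definition boundary2 (E : pt -> Prop) (x : pt) : Prop :=
  forall rho : R, 0 < rho ->
    (exists y, ball2 x rho y /\ E y) /\ (exists y, ball2 x rho y /\ ~ E y).

Definition H1_null (N : pt -> Prop) : Prop :=
  forall eps : R, 0 < eps ->
    exists (C : nat -> pt -> Prop) (d : nat -> R),
      (forall x, N x -> exists n, C n x) /\
      (forall n, 0 <= d n) /\
      (forall n p q, C n p -> C n q -> dist p q <= d n) /\
      (forall m, \sum_(i < m) d i <= eps).

(* nu is the outer unit normal to the convex set E at x: the unique unit
   vector nu with (y - x) . nu <= 0 for all y in E (unique supporting
   normal; it exists at H^1-a.e. boundary point of a convex set). *)
Definition supp_normal (E : pt -> Prop) (x nu : pt) : Prop :=
  enorm nu = 1 /\ forall y, E y -> dot (psub y x) nu <= 0.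
Definition outer_normal (E : pt -> Prop) (x nu : pt) : Prop :=
  supp_normal E x nu /\ forall mu, supp_normal E x mu -> mu = nu.
End Defs.

From mathcomp Require Import all_boot all_order all_algebra.
From mathcomp Require Import reals.
From mathcomp.algebra_tactics Require Import ring lra.
Set Implicit Arguments. Unset Strict Implicit. Unset Printing Implicit Defensive.
Import Order.TTheory GRing.Theory Num.Theory.
Local Open Scope ring_scope.

(* Let E be convex with B_{1-δ} ⊆ E ⊆ B_{1+δ}, x ∈ ∂E and ν a supporting unit
   normal at x.  Since the half-plane {(z - x).ν <= 0} contains B_{1-δ}, we get
   x.ν >= 1 - δ, and since |x| <= 1 + δ the tangential part of x is O(√δ).
   Hence for y near x inside the cone (x - y).ν >= α|x - y|, the radial product
   x.(x - y) is at least α|x - y|/2 once δ < α²/64.  Such a y lies on a short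
   segment from a point p ∈ E close to x to a point z of the inner disc
   B_{1-δ}, so y ∈ E by convexity.

   The cone condition thus holds at EVERY boundary point and for EVERY
   supporting normal, so the exceptional set of the theorem is empty and in
   particular H^1-null. *)

Section PlaneGeometry.
Variable R : realType.
Implicit Types (u v w x y z p nu d : pt R) (E : pt R -> Prop).

Definition padd (u v : pt R) : pt R := (u.1 + v.1, u.2 + v.2).
Definition pscale (s : R) (u : pt R) : pt R := (s * u.1, s * u.2).
Definition cross (u v : pt R) : R := u.1 * v.2 - u.2 * v.1.

Lemma lagrange_identity u v : dot u u * dot v v = dot u v ^+ 2 + cross u v ^+ 2.
Proof. by rewrite /dot /cross; ring. Qed.

(* The product u.v computed in the orthogonal frame (w, w^perp). *)
Lemma dot_frame u v w : dot u w * dot v w + cross u w * cross v w = dot u v * dot w w.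
Proof. by rewrite /dot /cross; ring. Qed.

Lemma dot_self_ge0 u : 0 <= dot u u.
Proof. by rewrite /dot -!expr2 addr_ge0 ?sqr_ge0. Qed.

Lemma cauchy_schwarz u v : dot u v ^+ 2 <= dot u u * dot v v.
Proof. by rewrite lagrange_identity lerDl sqr_ge0. Qed.

Lemma dot_self_eq0 u : dot u u = 0 -> u = (0, 0).
Proof.
case: u => u1 u2 /eqP; rewrite /dot /= -!expr2 paddr_eq0 ?sqr_ge0 //.
by rewrite !sqrf_eq0 => /andP[/eqP-> /eqP->].
Qed.

Lemma dot_psub_gt0 x y : y <> x -> 0 < dot (psub x y) (psub x y).
Proof.
move=> hyx; rewrite lt_def dot_self_ge0 andbT; apply/eqP => /dot_self_eq0.
case: x y hyx => [x1 x2] [y1 y2] hyx [/subr0_eq hx1 /subr0_eq hx2].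
by apply: hyx; rewrite hx1 hx2.
Qed.

Lemma dot_shift x p :
  dot p p = dot x x + 2 * dot x (psub p x) + dot (psub p x) (psub p x).
Proof. by case: x p => [x1 x2] [p1 p2]; rewrite /dot /psub /=; ring. Qed.

Lemma dot_padd u v : dot (padd u v) (padd u v) = dot u u + 2 * dot u v + dot v v.
Proof. by case: u v => [u1 u2] [v1 v2]; rewrite /dot /padd /=; ring. Qed.

Lemma psub0 y : psub y (0, 0) = y.
Proof. by case: y => y1 y2; rewrite /psub /= !subr0. Qed.

Lemma enorm_sqr u : enorm u ^+ 2 = dot u u.
Proof. by rewrite /enorm sqr_sqrtr // dot_self_ge0. Qed.

Lemma enorm_ltE u r : 0 < r -> (enorm u < r) = (dot u u < r ^+ 2).
Proof.
by move=> r0; rewrite /enorm -{1}(gtr0_norm r0) -sqrtr_sqr ltr_sqrt // exprn_gt0.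
Qed.

Lemma dist_sym x y : dist x y = dist y x.
Proof. by rewrite /dist /enorm /dot /psub /=; congr Num.sqrt; ring. Qed.

Lemma ball2E c r y : 0 < r -> ball2 c r y <-> dot (psub y c) (psub y c) < r ^+ 2.
Proof. by move=> r0; rewrite /ball2 /dist enorm_ltE. Qed.

Lemma perturb_in_disc u v A k : 0 < k < 1 -> A <= 1 ->
  dot u u < A - k -> dot v v < (k / 8) ^+ 2 -> dot (padd u v) (padd u v) < A.
Proof.
case/andP=> k0 k1 A1 hu hv; rewrite dot_padd.
have hu0 := dot_self_ge0 u; have hv0 := dot_self_ge0 v.
have hcs : dot u v ^+ 2 <= (k / 8) ^+ 2.
  apply: (le_trans (cauchy_schwarz u v)).
  have : dot u u <= 1 by lra.
  nra.
have huv : dot u v <= k / 8 by nra.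
have hk : (k / 8) ^+ 2 <= k / 8 by nra.
lra.
Qed.

Lemma limit_in_closed_disc x B :
  (forall rho, 0 < rho ->
     exists p, dot (psub p x) (psub p x) < rho ^+ 2 /\ dot p p < B) ->
  dot x x <= B.
Proof.
move=> happrox; rewrite leNgt; apply/negP => hxB.
have [p0 [_ hp0]] := happrox 1 ltr01.
have hB : 0 <= B by apply: le_trans (dot_self_ge0 p0) (ltW hp0).
set S := dot x x in hxB; pose m := S - B.
have hS : 0 <= S := dot_self_ge0 x.
have m0 : 0 < m by rewrite /m; lra.
pose rho := m / (2 * (S + 1)).
have hrho : 0 < rho by apply: divr_gt0; lra.
have hrhoS : rho * (S + 1) = m / 2 by rewrite /rho; field; lra.
have [p [hpx hpB]] := happrox rho hrho.
set v := psub p x in hpx.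
have hxv : dot x v ^+ 2 < (m / 2) ^+ 2.
  apply: le_lt_trans (cauchy_schwarz x v) _; rewrite -/S -hrhoS.
  have := dot_self_ge0 v; nra.
have hxv' : - (m / 2) < dot x v by nra.
have := dot_shift x p; rewrite -/v -/S.
have := dot_self_ge0 v; rewrite /m in hxv'; lra.
Qed.

Lemma support_lower_bound E x nu a : 0 < a ->
  (forall z, dot z z < a ^+ 2 -> E z) -> supp_normal E x nu -> a <= dot x nu.
Proof.
move=> a0 hin [hnu1 hsupp].
have hnu : dot nu nu = 1 by rewrite -enorm_sqr hnu1 expr1n.
have hs : forall s, 0 <= s -> s < a -> s <= dot x nu.
  move=> s s0 sa.
  have hsnu : dot (pscale s nu) (pscale s nu) = s ^+ 2 * dot nu nu.
    by rewrite /dot /pscale /=; ring.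
  have hz : dot (pscale s nu) (pscale s nu) < a ^+ 2 by rewrite hsnu hnu; nra.
  have := hsupp _ (hin _ hz).
  have -> : dot (psub (pscale s nu) x) nu = s * dot nu nu - dot x nu.
    by rewrite /dot /psub /pscale /=; ring.
  by rewrite hnu; lra.
have hX0 : 0 <= dot x nu by apply: hs; lra.
rewrite leNgt; apply/negP => hXa.
have := hs ((dot x nu + a) / 2); lra.
Qed.

(* Radial estimate: if the supporting line at x is at distance >= 1 - dl from
   the origin and |x| <= 1 + dl, then x is almost parallel to ν, so any
   displacement d in the cone d.ν >= al|d| satisfies x.d >= al|d|/2. *)
Lemma radial_lower_bound x nu d dl al t :
  0 < al -> 0 <= dl < 4^-1 -> dl < al ^+ 2 / 64 ->
  dot nu nu = 1 -> 1 - dl <= dot x nu -> dot x x <= (1 + dl) ^+ 2 ->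
  dot d d = t ^+ 2 -> 0 <= t -> al * t <= dot d nu ->
  al * t / 2 <= dot x d.
Proof.
move=> al0 /andP[dl0 dl1] dlal hnu hX hx hd t0 hD.
have hxx := lagrange_identity x nu; have hdd := lagrange_identity d nu.
have hxd := dot_frame x d nu.
rewrite hnu !mulr1 in hxx hdd hxd; rewrite hd in hdd.
set X := dot x nu in hX hxx hxd; set D := dot d nu in hD hdd hxd.
set P := cross x nu in hxx hxd; set Q := cross d nu in hdd hxd.
have hP : P ^+ 2 < (al / 4) ^+ 2 by nra.
have hQ : Q ^+ 2 <= t ^+ 2 by nra.
have hPQ : - (P * Q) <= al / 4 * t.
  have hPQ2 : (P * Q) ^+ 2 <= (al / 4 * t) ^+ 2.
    rewrite [(P * Q) ^+ 2]exprMn [(al / 4 * t) ^+ 2]exprMn.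
    by apply: ler_pM; rewrite ?sqr_ge0 // ltW.
  have : 0 <= al / 4 * t by apply: mulr_ge0; lra.
  nra.
have hXD : 3 / 4 * (al * t) <= X * D.
  have : 0 <= (X - 3 / 4) * (al * t) by apply: mulr_ge0; nra.
  have : 0 <= X * (D - al * t) by apply: mulr_ge0; lra.
  lra.
lra.
Qed.

(* Moving x against d by (x.d)/|d|^2 times d removes the d-component of x:
   |x - (x.d/t^2) d|^2 = |x|^2 - (x.d)^2/t^2 where t = |d|. *)
Lemma shifted_point_in_disc x d dl al t :
  0 < t -> 0 <= dl -> dl < al ^+ 2 / 64 -> dot x x <= (1 + dl) ^+ 2 ->
  dot d d = t ^+ 2 -> 0 <= al * t / 2 -> al * t / 2 <= dot x d ->
  dot (psub x (pscale (dot x d / t ^+ 2) d)) (psub x (pscale (dot x d / t ^+ 2) d))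
    < (1 - dl) ^+ 2 - 3 * al ^+ 2 / 16.
Proof.
move=> t0 dl0 dlal hx hd hat hc; set c := dot x d in hc *.
set u := psub x (pscale (c / t ^+ 2) d).
have -> : dot u u = dot x x - c ^+ 2 / t ^+ 2.
  have -> : dot x x - c ^+ 2 / t ^+ 2
    = dot x x - 2 * (c / t ^+ 2) * c + (c / t ^+ 2) ^+ 2 * t ^+ 2 by field; lra.
  by rewrite /u -hd /c /dot /psub /pscale /=; ring.
have hct : al ^+ 2 / 4 <= c ^+ 2 / t ^+ 2.
  rewrite ler_pdivlMr ?exprn_gt0 //.
  have -> : al ^+ 2 / 4 * t ^+ 2 = (al * t / 2) ^+ 2 by field.
  by rewrite ler_sqr // nnegrE; lra.
nra.
Qed.

(* Convex interpolation: let E be convex with B_{1-dl} ⊆ E, x a limit of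
   points of E with |x| <= 1 + dl, and y with |x - y| = t < al/4 and
   x.(x - y) >= al t/2.  With l = t^2 / x.(x - y), the point y is the convex
   combination (1 - l) p + l z of a point p ∈ E close to x and a point z of
   B_{1-dl}; hence y ∈ E. *)
Lemma convex_interpolation E x y dl al t :
  convex2 E -> 0 < al < 1 -> 0 <= dl -> dl < al ^+ 2 / 64 ->
  (forall z, dot z z < (1 - dl) ^+ 2 -> E z) ->
  (forall rho, 0 < rho -> exists p, E p /\ dot (psub p x) (psub p x) < rho ^+ 2) ->
  dot x x <= (1 + dl) ^+ 2 ->
  dot (psub x y) (psub x y) = t ^+ 2 -> 0 < t -> t < al / 4 ->
  al * t / 2 <= dot x (psub x y) -> E y.
Proof.
move=> hconv /andP[al0 al1] dl0 dlal hin happrox hx hd t0 tal hc.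
set d := psub x y in hd hc; set c := dot x d in hc.
have hc2 : 2 * t ^+ 2 < c by nra.
have c0 : 0 < c by nra.
pose l := t ^+ 2 / c.
have l0 : 0 < l by rewrite /l divr_gt0 // exprn_gt0.
have l1 : l < 1 / 2 by rewrite /l ltr_pdivrMr //; lra.
set k := 3 * al ^+ 2 / 16.
have k01 : 0 < k < 1 by apply/andP; split; rewrite /k; nra.
have hrho : 0 < l * (k / 8) by apply: mulr_gt0; lra.
have [p [hpE hpx]] := happrox _ hrho.
pose u := psub x (pscale (c / t ^+ 2) d).
pose v := pscale ((1 - l) / l) (psub x p).
have hu : dot u u < (1 - dl) ^+ 2 - k.
  by apply: (shifted_point_in_disc t0 dl0 dlal hx hd _ hc); nra.
have hv : dot v v < (k / 8) ^+ 2.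
  have -> : dot v v = ((1 - l) / l) ^+ 2 * dot (psub p x) (psub p x).
    by rewrite /v /dot /pscale /psub /=; ring.
  have hl2 : ((1 - l) / l) ^+ 2 * (l * (k / 8)) ^+ 2 = (1 - l) ^+ 2 * (k / 8) ^+ 2.
    by field; lra.
  have hlt : ((1 - l) / l) ^+ 2 * dot (psub p x) (psub p x)
           < ((1 - l) / l) ^+ 2 * (l * (k / 8)) ^+ 2.
    by rewrite ltr_pM2l // exprn_gt0 // divr_gt0 //; lra.
  have : (1 - l) ^+ 2 <= 1 by nra.
  have : 0 < (k / 8) ^+ 2 by rewrite exprn_gt0 //; case/andP: k01; lra.
  nra.
have dl1 : dl < 1 by nra.
have hz : E (padd u v) by apply/hin/(perturb_in_disc k01) => //; nra.
have hl01 : 0 <= l <= 1 by apply/andP; split; lra.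
have := hconv _ _ l hpE hz hl01.
suff -> : ((1 - l) * p.1 + l * (padd u v).1, (1 - l) * p.2 + l * (padd u v).2) = y by [].
rewrite /u /v /l /d /padd /pscale /psub /=.
have t0' : t != 0 by rewrite gt_eqF.
have c0' : c != 0 by rewrite gt_eqF.
by rewrite [RHS]surjective_pairing; congr (_, _); field; rewrite c0' t0'.
Qed.

Lemma cone_in_convex E dl al x nu y :
  convex2 E -> 0 < al < 1 -> 0 < dl < 4^-1 -> dl < al ^+ 2 / 64 ->
  (forall z, ball2 (0, 0) (1 - dl) z -> E z) ->
  (forall z, E z -> ball2 (0, 0) (1 + dl) z) ->
  boundary2 E x -> supp_normal E x nu ->
  ball2 x (al / 4) y -> y <> x -> al <= dot (psub x y) nu / dist x y -> E y.
Proof.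
move=> hconv hal /andP[dl0 dl1] dlal hin hout hbd hnu hy hyx hang.
have [al0 al1] := andP hal.
have hin' : forall z, dot z z < (1 - dl) ^+ 2 -> E z.
  by move=> z hz; apply: hin; apply/ball2E; rewrite ?psub0 //; lra.
have happrox : forall rho, 0 < rho ->
    exists p, E p /\ dot (psub p x) (psub p x) < rho ^+ 2.
  move=> rho rho0; have [[p [hp hpE]] _] := hbd rho rho0.
  by exists p; split => //; apply/ball2E.
have hx : dot x x <= (1 + dl) ^+ 2.
  apply: limit_in_closed_disc => rho rho0.
  have [p [hpE hp]] := happrox rho rho0; exists p; split => //.
  by rewrite -[p in dot p p]psub0; apply/ball2E; [lra | exact: hout].
have hnu1 : dot nu nu = 1 by rewrite -enorm_sqr hnu.1 expr1n.
have hX : 1 - dl <= dot x nu by apply: (support_lower_bound _ hin' hnu); lra.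
set t := dist x y in hang.
have ht2 : dot (psub x y) (psub x y) = t ^+ 2 by rewrite /t /dist enorm_sqr.
have t0 : 0 < t by rewrite /t /dist /enorm sqrtr_gt0 dot_psub_gt0.
have tal : t < al / 4 by rewrite /t dist_sym; move: hy; rewrite /ball2.
have hD : al * t <= dot (psub x y) nu by rewrite -ler_pdivlMr.
apply: (convex_interpolation hconv hal (ltW dl0) dlal hin' happrox hx ht2 t0 tal).
apply: (radial_lower_bound al0 _ dlal hnu1 hX hx ht2 (ltW t0) hD).
by apply/andP; split; lra.
Qed.

Lemma H1_null_empty (N : pt R -> Prop) : (forall x, ~ N x) -> H1_null N.
Proof.
move=> hN eps eps0; exists (fun _ _ => False), (fun _ => 0).
split; [by move=> x /hN | split; [by [] | split; [by [] | ]]].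
by move=> m; rewrite big1 // ltW.
Qed.

End PlaneGeometry.

Theorem lemma3p9 (R : realType) (delta : R -> R)
  (hdelta : forall e : R, 0 < e -> 0 < delta e < 4^-1)
  (hdelta0 : forall eta : R, 0 < eta ->
     exists kappa : R, 0 < kappa /\
       forall e : R, 0 < e -> e < kappa -> delta e < eta)
  (alpha : R) (halpha : 0 < alpha < 1) :
  exists r : R, 0 < r /\ exists eps2 : R, 0 < eps2 /\
    forall (E : pt R -> Prop) (e : R),
      convex2 E -> 0 < e -> e < eps2 ->
      (forall y, ball2 (0, 0) (1 - delta e) y -> E y) ->
      (forall y, E y -> ball2 (0, 0) (1 + delta e) y) ->
      H1_null (fun x => boundary2 E x /\
        ~ (forall nu, outer_normal E x nu ->
             forall y, ball2 x r y -> y <> x ->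
               alpha <= dot (psub x y) nu / dist x y -> E y)).
Proof.
have [al0 _] := andP halpha.
have heta : 0 < alpha ^+ 2 / 64 by rewrite divr_gt0 ?exprn_gt0.
have [kappa [kappa0 hkappa]] := hdelta0 _ heta.
exists (alpha / 4); split; first by rewrite divr_gt0.
exists kappa; split => // E e hconv e0 ekappa hin hout.
apply: H1_null_empty => x [hbd]; apply => nu [hnu _] y.
exact: (cone_in_convex hconv halpha (hdelta e e0) (hkappa e e0 ekappa) hin hout hbd hnu).
Qed.
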